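(* Let $\mathbf V$ be a monoid variety satisfying the identity $x^n\approx x^{n+1}$ for some $n\in\mathbb N$. If $M_\gamma(xx^+yy^+)\notin\mathbf V$, then $\mathbf V$ satisfies the identity $x^ny^n\approx (x^ny^n)^n$.
   Context: Words are elements of the free monoid $\mathfrak X^\ast$ over a countably infinite alphabet $\mathfrak X$. For a word $\mathbf w$, a letter is simple in $\mathbf w$ if it occurs exactly once. The congruence $\gamma$ on $\mathfrak X^\ast$ is defined by: $\mathbf u\mathrel\gamma\mathbf v$ iff $\mathbf u$ and $\mathbf v$ have the same set of simple letters and $\mathbf u$ can be obtained from $\mathbf v$ by changing the individual exponents of letters (i.e. $\mathbf u=x_1^{e_1}\cdots x_r^{e_r}$, $\mathbf v=x_1^{f_1}\cdots x_r^{f_r}$ with letters $x_i$ and $e_i,f_i\ge1$). For $\gamma$-classes $\mathtt u,\mathtt v$ write $\mathtt v\le\mathtt u$ if $\mathtt u=\mathtt p\mathtt v\mathtt s$ for some $\gamma$-classes $\mathtt p,\mathtt s$. For a set $\mathtt W$ of $\gamma$-classes, $M_\gamma(\mathtt W)$ is the Rees quotient of $\mathfrak X^\ast/\gamma$ by the ideal of all $\gamma$-classes not $\le$ any member of $\mathtt W$. $\gamma$-classes are written as regular expressions with $x^+=\{x^k\mid k\ge1\}$; thus $xx^+yy^+$ is the $\gamma$-class of $x^2y^2$, namely $\{x^ay^b\mid a,b\ge2\}$, and $M_\gamma(xx^+yy^+)=M_\gamma(\{xx^+yy^+\})$. *)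

From Stdlib Require Import ClassicalEpsilon.
From mathcomp Require Import all_boot.
Set Implicit Arguments. Unset Strict Implicit. Unset Printing Implicit Defensive.

Definition word := seq nat.
Definition identity := (word * word)%type.

Record magma := Magma { mcar :> Type; mop : mcar -> mcar -> mcar; munit : mcar }.

Definition is_monoid (M : magma) : Prop :=
  (forall a b c : M, mop a (mop b c) = mop (mop a b) c) /\
  (forall a : M, mop (munit M) a = a) /\ (forall a : M, mop a (munit M) = a).

Definition ev (M : magma) (f : nat -> M) (w : word) : M :=
  foldr (fun x m => mop (f x) m) (munit M) w.

Definition sat (M : magma) (i : identity) : Prop :=
  forall f : nat -> M, ev f i.1 = ev f i.2.

(* The monoid variety defined by a set Sigma of identities (by Birkhoff's
   theorem every monoid variety is of this form). *)
Definition inV (Sigma : identity -> Prop) (M : magma) : Prop :=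
  is_monoid M /\ forall i, Sigma i -> sat M i.

Definition Vsat (Sigma : identity -> Prop) (i : identity) : Prop :=
  forall M : magma, inV Sigma M -> sat M i.

Definition simple (x : nat) (w : word) : bool := count_mem x w == 1.

Definition expand (xs es : seq nat) : word :=
  flatten [seq nseq p.2 p.1 | p <- zip xs es].

Definition gamma (u v : word) : Prop :=
  (forall x, simple x u = simple x v) /\
  exists xs es fs : seq nat,
    size es = size xs /\ size fs = size xs /\
    all (fun e => 0 < e) es /\ all (fun e => 0 < e) fs /\
    u = expand xs es /\ v = expand xs fs.

(* W : a set of gamma-classes, given as a predicate on words (a class is
   in W iff its representatives satisfy W).  The class of w is <= some
   member of W iff class(t) = class(p) class(w) class(s) = class(p w s)
   for some words p, s and some t in W. *)
Definition below (W : word -> Prop) (w : word) : Prop :=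
  exists p s t : word, W t /\ gamma (p ++ w ++ s) t.

(* maximal runs (letter, length) of a word *)
Definition runs (w : word) : seq (nat * nat) :=
  foldr (fun x r => match r with
                    | (y, k) :: r' => if x == y then (y, k.+1) :: r' else (x, 1) :: r
                    | [::] => [:: (x, 1)]
                    end) [::] w.

(* norm w: every maximal run x^k of w replaced by x if x is simple in w and
   by x^2 otherwise.  norm w is gamma-equivalent to w, and u gamma v iff
   norm u = norm v; so norm-fixed words are canonical representatives of
   gamma-classes. *)
Definition norm (w : word) : word :=
  flatten [seq nseq (if simple p.1 w then 1 else 2) p.1 | p <- runs w].

(* Elements: None = 0, Some c = the gamma-class with canonical representative
   c, for classes <= some member of W. *)
Definition Mg_car (W : word -> Prop) : Type :=
  option {w : word | norm w = w /\ below W w}.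

Definition Mg_cls (W : word -> Prop) (c : word) : Mg_car W :=
  match excluded_middle_informative (norm c = c /\ below W c) with
  | left H => Some (exist _ c H)
  | right _ => None
  end.

Definition Mg_mul (W : word -> Prop) (a b : Mg_car W) : Mg_car W :=
  match a, b with
  | Some a, Some b => Mg_cls W (norm (proj1_sig a ++ proj1_sig b))
  | _, _ => None
  end.

(* identity: the class of the empty word (equal to 0 iff W is empty) *)
Definition Mgamma (W : word -> Prop) : magma :=
  @Magma (Mg_car W) (@Mg_mul W) (Mg_cls W [::]).

(* letters x := 0, y := 1 *)
(* xx^+yy^+ : the gamma-class of x^2 y^2 *)
Definition W_xxyy : word -> Prop := gamma [:: 0; 0; 1; 1].

Definition wpow (w : word) (n : nat) : word := flatten (nseq n w).

(* M_gamma(xx^+yy^+) is the image of the monoid Mxy of exponent pairs (i, j), i, j <= 2,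
   plus a zero, in which y^j x^k = 0 for j, k > 0.  If it lies outside V, some identity
   u ~ v of V fails in Mxy under an assignment g; replacing every letter z by a word
   x^i y^j representing g z gives an identity U ~ V of V in x and y whose sides take
   different values in Mxy.  If both sides have the form x^a y^b, their exponents of x or
   of y differ after capping at 2, so V satisfies z^c ~ z^d with c < d and c <= 1; with
   z^n ~ z^(n+1) this gives z ~ z^n.  Otherwise exactly one side, say U, has that form:
   evaluated at the idempotents X = p^n, Y = q^n and multiplied by X on the left and by
   Y on the right, U becomes XY while V becomes (XY)^k with k >= 2, so XY = (XY)^n. *)

From Pilot Require Import Defs.
From mathcomp Require Import all_boot.
From Stdlib Require Import Classical ClassicalEpsilon.
Set Implicit Arguments. Unset Strict Implicit.

Definition le01 (a b : nat) : bool := a <= b <= 1.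

Definition xy_sorted (w : word) : bool := path le01 0 w.

Lemma xy_sorted0 w : xy_sorted (0 :: w) = xy_sorted w.
Proof. by []. Qed.

Lemma xy_sorted1 w : xy_sorted (1 :: w) = xy_sorted w && (0 \notin w).
Proof.
rewrite /xy_sorted /=; elim: w => [|[|[|z]] w IH] //=; first by rewrite andbF.
by rewrite inE /= IH -andbA andbb.
Qed.

Lemma xy_sorted_of_notin0 w : all (fun z => z <= 1) w -> 0 \notin w -> xy_sorted w.
Proof.
elim: w => [|[|[|z]] w IH] //= w01; rewrite inE /= xy_sorted1 => w0.
by rewrite w0 IH.
Qed.

Lemma xy_sortedE w :
  xy_sorted w -> w = nseq (count_mem 0 w) 0 ++ nseq (count_mem 1 w) 1.
Proof.
elim: w => [|[|[|z]] w IH] //.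
  by rewrite xy_sorted0 /= add0n => /IH {1}->.
rewrite xy_sorted1 => /andP [/IH w01 /count_memPn w0] /=.
by rewrite w0 /= {1}w01 w0.
Qed.

Lemma path_le01_expand y xs es : size es = size xs -> all (fun e => 0 < e) es ->
  path le01 y (expand xs es) = path le01 y xs.
Proof.
elim: xs y es => [|x xs IH] y [|e es] //= [size_es] /andP [e_gt0 es_gt0].
rewrite /expand /= -/(expand xs es).
case: e e_gt0 => // e _ /=; case yx: (le01 y x) => //=.
have x1 : x <= 1 by case/andP: yx.
suff -> : path le01 x (nseq e x ++ expand xs es) = path le01 x (expand xs es) by rewrite IH.
by elim: e => //= e ->; rewrite /le01 leqnn x1.
Qed.

Lemma gamma_xy_sorted u v : gamma u v -> xy_sorted u = xy_sorted v.
Proof.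
case=> _ [xs [es [fs [size_es [size_fs [es_gt0 [fs_gt0 [-> ->]]]]]]]].
by rewrite /xy_sorted !path_le01_expand.
Qed.

Lemma xy_sorted_infix p w s : xy_sorted (p ++ w ++ s) -> xy_sorted w.
Proof.
rewrite /xy_sorted !cat_path => /and3P [_ + _].
by case: w => //= z w /andP [/andP [_ z1] ->]; rewrite /le01 z1.
Qed.

Definition mpow (M : magma) (x : M) (k : nat) : M := iter k (mop x) (munit M).
Arguments mpow : simpl never.

Section MonoidPowers.

Variable M : magma.
Hypothesis HM : is_monoid M.
Let mopA : forall a b c : M, mop a (mop b c) = mop (mop a b) c := HM.1.
Let mop1m : forall a : M, mop (munit M) a = a := HM.2.1.
Let mopm1 : forall a : M, mop a (munit M) = a := HM.2.2.

Lemma mpow0 (x : M) : mpow x 0 = munit M.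
Proof. by []. Qed.

Lemma mpowS (x : M) k : mpow x k.+1 = mop x (mpow x k).
Proof. by []. Qed.

Lemma mpow1 (x : M) : mpow x 1 = x.
Proof. exact: mopm1. Qed.

Lemma mpowD (x : M) a b : mpow x (a + b) = mop (mpow x a) (mpow x b).
Proof. by elim: a => [|a IH]; rewrite ?mop1m // addSn !mpowS IH mopA. Qed.

Lemma mpowSr (x : M) k : mpow x k.+1 = mop (mpow x k) x.
Proof. by rewrite -addn1 mpowD mpow1. Qed.

Lemma mpow_shift (x y : M) k : mop x (mpow (mop y x) k) = mop (mpow (mop x y) k) x.
Proof.
elim: k => [|k IH]; first by rewrite mop1m mopm1.
by rewrite !mpowS -(mopA (mop x y)) -IH !mopA.
Qed.

Lemma ev_cat (f : nat -> M) u v : ev f (u ++ v) = mop (ev f u) (ev f v).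
Proof. by elim: u => [|z u IH] /=; rewrite ?mop1m // IH mopA. Qed.

Lemma eq_ev (f g : nat -> M) : f =1 g -> ev f =1 ev g.
Proof. by move=> fg; elim=> [|z w IH] //=; rewrite fg IH. Qed.

Lemma ev_flatten (f : nat -> M) (s : nat -> word) w :
  ev f (flatten [seq s z | z <- w]) = ev (fun z => ev f (s z)) w.
Proof. by elim: w => [|z w IH] //=; rewrite ev_cat IH. Qed.

Lemma ev_nseq (f : nat -> M) k z : ev f (nseq k z) = mpow (f z) k.
Proof. by elim: k => [|k IH] //=; rewrite IH. Qed.

Lemma ev_wpow (f : nat -> M) w k : ev f (wpow w k) = mpow (ev f w) k.
Proof. by elim: k => [|k IH] //=; rewrite ev_cat IH. Qed.

Lemma ev_count (x : M) z w :
  ev (fun y => if y == z then x else munit M) w = mpow x (count_mem z w).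
Proof.
by elim: w => [|y w IH] //=; rewrite IH eq_sym; case: (z == y); rewrite ?mop1m.
Qed.

Lemma ev_idem_sandwich (X Y : M) : mop X X = X -> mop Y Y = Y ->
  forall w, all (fun z => z <= 1) w ->
  exists a b,
    let E := ev (fun z => if z == 0 then X else Y) w in
    [/\ mop X (mop E Y) = mpow (mop X Y) a.+1,
        mop Y (mop E Y) = mop (mpow (mop Y X) b) Y,
        (0 < a) = ~~ xy_sorted w & (0 < b) = (0 \in w)].
Proof.
move=> XX YY; elim=> [|z w IH].
  by exists 0, 0; rewrite /= mpow1 mpow0 !mop1m YY.
case/andP=> z01 w01; have [a [b [EX EY Ea Eb]]] /= := IH w01.
set E := ev _ w in EX EY *.
case: z z01 => [|[|//]] _ /=.
- exists a, a.+1; rewrite xy_sorted0 inE eqxx -(mopA X) EX.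
  by split=> //; [rewrite mpowS !mopA XX | exact: mpow_shift].
- exists b, b; rewrite xy_sorted1 inE negb_and negbK -(mopA Y).
  split=> //; first by rewrite EY mopA mpow_shift -mopA -mpowSr.
    by rewrite mopA YY.
  rewrite Eb orb_idl //; apply: contraR => w0.
  exact: xy_sorted_of_notin0.
Qed.

End MonoidPowers.

Inductive capped := Zero | One | Many.

Definition cap (k : nat) : capped := match k with 0 => Zero | 1 => One | _ => Many end.

Definition uncap (a : capped) : nat := match a with Zero => 0 | One => 1 | Many => 2 end.

Definition cadd (a b : capped) : capped :=
  match a, b with Zero, c | c, Zero => c | _, _ => Many end.

Lemma uncapK : cancel uncap cap.
Proof. by case. Qed.

Lemma capped_eq_dec (a b : capped) : {a = b} + {a <> b}.
Proof. by decide equality. Qed.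

Definition xy_mul (s t : option (capped * capped)) : option (capped * capped) :=
  match s, t with
  | Some (i, j), Some (k, l) =>
      match j, k with Zero, _ | _, Zero => Some (cadd i k, cadd j l) | _, _ => None end
  | _, _ => None
  end.

(* Some (i, j) is the class of x^i y^j, exponent Many meaning "at least 2"; None is 0. *)
Definition Mxy : magma := @Defs.Magma _ xy_mul (Some (Zero, Zero)).

Lemma Mxy_monoid : is_monoid Mxy.
Proof.
split; last split.
- by move=> [[[] []]|] [[[] []]|] [[[] []]|].
- by move=> [[[] []]|].
- by move=> [[[] []]|].
Qed.

Definition xy_gen (z : nat) : Mxy :=
  match z with 0 => Some (One, Zero) | 1 => Some (Zero, One) | _ => None end.

Definition xy_val (w : word) : Mxy := ev xy_gen w.

Lemma xy_valE w : xy_val w =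
  if xy_sorted w then Some (cap (count_mem 0 w), cap (count_mem 1 w)) else None.
Proof.
rewrite /xy_val; elim: w => [|[|[|z]] w IH] //=; rewrite IH !add0n.
- by rewrite xy_sorted0; case: (xy_sorted w); case: (count_mem 0 w) => [|[|c]].
- rewrite xy_sorted1 -has_pred1 has_count; case: (xy_sorted w) => //.
  by case: (count_mem 0 w) => [|[|c]]; case: (count_mem 1 w) => [|[|d]].
Qed.

(* The word y x of rep None lies in no class below xx^+yy^+, so it represents 0. *)
Definition rep (t : Mxy) : word :=
  if t is Some (i, j) then nseq (uncap i) 0 ++ nseq (uncap j) 1 else [:: 1; 0].

Lemma xy_val_rep t : xy_val (rep t) = t.
Proof. by case: t => [[[] []]|]. Qed.

Lemma rep_bin t : all (fun z => z <= 1) (rep t).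
Proof. by case: t => [[[] []]|]. Qed.

Section Aperiodic.

Variables (M : magma) (n : nat).
Hypothesis HM : is_monoid M.
Hypothesis aperiodic : forall x : M, mpow x n = mpow x n.+1.

Lemma mpow_ge (x : M) m : n <= m -> mpow x m = mpow x n.
Proof.
move=> /subnKC <-; elim: (m - n) => [|k IH]; first by rewrite addn0.
by rewrite addnS mpowS IH -mpowS -aperiodic.
Qed.

Lemma mpow_idem (x : M) : mop (mpow x n) (mpow x n) = mpow x n.
Proof. by rewrite -mpowD // mpow_ge // leq_addr. Qed.

Lemma mpow_fix (x : M) k : 0 < k -> x = mpow x k.+1 -> x = mpow x n.
Proof.
move=> k_gt0 xk.
have xm m : x = mpow x (m * k).+1.
  elim: m => [|m IH]; first by rewrite mpow1.
  by rewrite mulSn -addnS mpowD // -IH -mpowSr.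
by rewrite {1}(xm n) mpow_ge // leqW // leq_pmulr.
Qed.

Lemma mpow_fix_of_eq (x : M) c d : mpow x c = mpow x d -> cap c <> cap d -> x = mpow x n.
Proof.
wlog lt_cd : c d / c < d.
  move=> wlog_cd xcd cd; case: (ltngtP c d) => [lt|lt|eq_cd].
  - exact: wlog_cd lt xcd cd.
  - by apply: (wlog_cd d c) => // dc; apply: cd.
  - by rewrite eq_cd in cd.
case: c lt_cd => [|[|c]] lt_cd xcd cd.
- apply: (mpow_fix lt_cd).
  by rewrite mpowS -xcd mpow0 HM.2.2.
- apply: (mpow_fix (k := d.-1)); first by case: d lt_cd {xcd cd} => [|[|d]].
  by rewrite prednK ?(ltnW lt_cd) // -xcd mpow1.
- by case: d lt_cd {xcd} cd => [|[|[|d]]].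
Qed.

Lemma xnyn_idem_of_sorted_unsorted (U V : word) :
  (forall f : nat -> M, ev f U = ev f V) ->
  all (fun z => z <= 1) U -> all (fun z => z <= 1) V ->
  xy_sorted U -> ~~ xy_sorted V ->
  forall p q : M, mop (mpow p n) (mpow q n) = mpow (mop (mpow p n) (mpow q n)) n.
Proof.
move=> MUV U01 V01 sU nsV p q.
have [a [_ [/= XUY _ a_eq _]]] := ev_idem_sandwich HM (mpow_idem p) (mpow_idem q) U01.
have [b [_ [/= XVY _ b_eq _]]] := ev_idem_sandwich HM (mpow_idem p) (mpow_idem q) V01.
move: a_eq b_eq; rewrite sU nsV; case: a XUY => // XUY _ b_gt0.
by apply: (mpow_fix b_gt0); rewrite -XVY -MUV XUY mpow1.
Qed.

Lemma sat_xnyn_of_separating (u v : word) (g : nat -> Mxy) :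
  (forall f : nat -> M, ev f u = ev f v) -> ev g u <> ev g v ->
  sat M (nseq n 0 ++ nseq n 1, wpow (nseq n 0 ++ nseq n 1) n).
Proof.
move=> Muv guv.
suff xnyn_idem : forall p q : M,
    mop (mpow p n) (mpow q n) = mpow (mop (mpow p n) (mpow q n)) n.
  by move=> f; rewrite /= ev_wpow // ev_cat // !ev_nseq.
pose subst w := flatten [seq rep (g z) | z <- w].
have MUV (f : nat -> M) : ev f (subst u) = ev f (subst v).
  by rewrite /subst !(ev_flatten HM) Muv.
have subst01 w : all (fun z => z <= 1) (subst w).
  by elim: w => //= z w IH; rewrite all_cat rep_bin.
have val_subst w : xy_val (subst w) = ev g w.
  rewrite /xy_val /subst ev_flatten; last exact: Mxy_monoid.
  by apply: eq_ev => z; exact: xy_val_rep.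
move: guv; rewrite -!val_subst !xy_valE.
case sU: (xy_sorted (subst u)); case sV: (xy_sorted (subst v)) => // guv.
- have Mcount z (x : M) : mpow x (count_mem z (subst u)) = mpow x (count_mem z (subst v)).
    by rewrite -!(ev_count HM) MUV.
  suff [z cz] : exists z, cap (count_mem z (subst u)) <> cap (count_mem z (subst v)).
    by move=> p q; apply: mpow_fix_of_eq (Mcount z _) cz.
  case: (capped_eq_dec (cap (count_mem 0 (subst u))) (cap (count_mem 0 (subst v)))).
    by move=> c0; exists 1 => c1; apply: guv; rewrite c0 c1.
  by exists 0.
- exact: (xnyn_idem_of_sorted_unsorted MUV) (negbT sV).
- by apply: (xnyn_idem_of_sorted_unsorted (fun f => esym (MUV f))) => //; rewrite sU.
Qed.

End Aperiodic.

Section MagmaImage.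

Variables (A B : magma) (phi : A -> B) (psi : B -> A).
Hypothesis phiM : forall a b : A, phi (mop a b) = mop (phi a) (phi b).
Hypothesis phi1 : phi (munit A) = munit B.
Hypothesis phiK : cancel psi phi.

Lemma is_monoid_image : is_monoid A -> is_monoid B.
Proof.
move=> [mopA [mop1m mopm1]]; split; last split.
- by move=> a b c; rewrite -(phiK a) -(phiK b) -(phiK c) -!phiM mopA.
- by move=> a; rewrite -(phiK a) -phi1 -phiM mop1m.
- by move=> a; rewrite -(phiK a) -phi1 -phiM mopm1.
Qed.

Lemma ev_morph (f : nat -> A) w : phi (ev f w) = ev (phi \o f) w.
Proof. by elim: w => [|z w IH] //=; rewrite phiM IH. Qed.

Lemma sat_image i : sat A i -> sat B i.
Proof.
move=> Ai f; have phiKf : phi \o (psi \o f) =1 f by move=> z; exact: phiK.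
by rewrite -!(eq_ev phiKf) -!ev_morph Ai.
Qed.

End MagmaImage.

Lemma Mg_cls_some W c (Hc : norm c = c /\ below W c) : Mg_cls W c = Some (exist _ c Hc).
Proof.
rewrite /Mg_cls; case: excluded_middle_informative => [Hc'|] //.
by rewrite (proof_irrelevance _ Hc' Hc).
Qed.

Lemma Mg_cls_none W c : ~ below W c -> Mg_cls W c = None.
Proof. by rewrite /Mg_cls => Wc; case: excluded_middle_informative => // - []. Qed.

Lemma below_xxyy_sorted w : below W_xxyy w -> xy_sorted w.
Proof.
case=> p [s [t [xxyy_t pws_t]]].
by apply: (@xy_sorted_infix p _ s); rewrite (gamma_xy_sorted pws_t) -(gamma_xy_sorted xxyy_t).
Qed.

Lemma gamma_xxyy a b c d :
  gamma (nseq a.+2 0 ++ nseq b.+2 1) (nseq c.+2 0 ++ nseq d.+2 1).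
Proof.
have nsimple e f x : simple x (nseq e.+2 0 ++ nseq f.+2 1) = false.
  rewrite /simple count_cat !count_nseq.
  by case: x => [|[|x]] /=; rewrite ?mul1n ?mul0n ?addn0.
split=> [x|]; first by rewrite !nsimple.
by exists [:: 0; 1], [:: a.+2; b.+2], [:: c.+2; d.+2]; rewrite /expand /= !cats0.
Qed.

Lemma below_xxyy a b : below W_xxyy (nseq a 0 ++ nseq b 1).
Proof.
exists [:: 0; 0], [:: 1; 1], (nseq a.+2 0 ++ nseq b.+2 1).
split; first exact: (gamma_xxyy 0 0).
have -> : [:: 0; 0] ++ (nseq a 0 ++ nseq b 1) ++ [:: 1; 1] = nseq a.+2 0 ++ nseq b.+2 1.
  by rewrite /= -catA; congr [:: _, _ & _ ++ _]; elim: b => //= b ->.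
exact: gamma_xxyy.
Qed.

Lemma runs_cons x r : runs (x :: r) =
  if runs r is (y, k) :: rs then (if x == y then (y, k.+1) :: rs else (x, 1) :: runs r)
  else [:: (x, 1)].
Proof. by []. Qed.

Lemma runs_head x r : (head (x, 0) (runs r)).1 = head x r.
Proof.
by case: r => // y r; rewrite runs_cons; case: (runs r) => [|[z k] rs] //; case: eqP.
Qed.

Lemma runs_nseq_cat (x k : nat) (r : word) :
  head x.+1 r != x -> runs (nseq k.+1 x ++ r) = (x, k.+1) :: runs r.
Proof.
move=> r_x; elim: k => [|k IH]; rewrite cat_cons runs_cons ?IH ?eqxx //.
case E: (runs r) => [|[y m] rs] //.
have -> : y = head x.+1 r by rewrite -(runs_head x.+1) E.
by rewrite eq_sym (negbTE r_x).
Qed.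

Lemma runs_xy a b : runs (nseq a 0 ++ nseq b 1) = [seq p <- [:: (0, a); (1, b)] | 0 < p.2].
Proof.
have runs_y c : runs (nseq c 1) = [seq p <- [:: (1, c)] | 0 < p.2].
  by case: c => // c; rewrite -[nseq _ _]cats0 runs_nseq_cat.
case: a => [|a]; first exact: runs_y.
by rewrite runs_nseq_cat ?runs_y //; case: b.
Qed.

Lemma norm_xy a b : norm (nseq a 0 ++ nseq b 1) = rep (Some (cap a, cap b)).
Proof.
have simple0 : simple 0 (nseq a 0 ++ nseq b 1) = (a == 1).
  by rewrite /simple count_cat !count_nseq /= mul1n mul0n addn0.
have simple1 : simple 1 (nseq a 0 ++ nseq b 1) = (b == 1).
  by rewrite /simple count_cat !count_nseq /= mul1n mul0n.
rewrite /norm runs_xy.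
by case: a simple0 simple1 => [|[|a]]; case: b => [|[|b]] s0 s1; rewrite /= ?s0 ?s1.
Qed.

Lemma rep_canonical i j :
  norm (rep (Some (i, j))) = rep (Some (i, j)) /\ below W_xxyy (rep (Some (i, j))).
Proof. by rewrite /= norm_xy !uncapK; split=> //; apply: below_xxyy. Qed.

Lemma Mg_cls_unsorted c : ~~ xy_sorted c -> Mg_cls W_xxyy c = None.
Proof. by move=> c_uns; apply: Mg_cls_none => /below_xxyy_sorted; apply/negP. Qed.

Definition xy_to_Mg (t : Mxy) : Mgamma W_xxyy := Mg_cls W_xxyy (rep t).

Definition Mg_to_xy (m : Mgamma W_xxyy) : Mxy := if m is Some c then xy_val (sval c) else None.

Lemma xy_to_Mg_None : xy_to_Mg None = None.
Proof. exact: Mg_cls_unsorted. Qed.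

Lemma Mg_to_xyK : cancel Mg_to_xy xy_to_Mg.
Proof.
case=> [[w [norm_w below_w]]|] /=; last exact: xy_to_Mg_None.
rewrite /xy_to_Mg; suff -> : rep (xy_val w) = w by exact: Mg_cls_some.
have w_xy := below_xxyy_sorted below_w.
by rewrite xy_valE w_xy -norm_xy -(xy_sortedE w_xy).
Qed.

Lemma Mg_cls_norm_rep_cat (s t : capped * capped) :
  Mg_cls W_xxyy (norm (rep (Some s) ++ rep (Some t)))
  = xy_to_Mg (mop (m := Mxy) (Some s) (Some t)).
Proof.
by case: s t => [[] []] [[] []]; first [reflexivity | rewrite /xy_to_Mg !Mg_cls_unsorted].
Qed.

Lemma xy_to_Mg_mul (s t : Mxy) : xy_to_Mg (mop s t) = mop (xy_to_Mg s) (xy_to_Mg t).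
Proof.
case: s => [s|]; last by rewrite xy_to_Mg_None.
case: s => i j; rewrite {2}/xy_to_Mg (Mg_cls_some (rep_canonical i j)).
case: t => [[k l]|]; last by rewrite xy_to_Mg_None.
by rewrite -Mg_cls_norm_rep_cat /xy_to_Mg (Mg_cls_some (rep_canonical k l)).
Qed.

Lemma xy_to_Mg_one : xy_to_Mg (Some (Zero, Zero)) = munit (Mgamma W_xxyy).
Proof. by []. Qed.

Theorem lemma4p1 (Sigma : identity -> Prop) (n : nat) :
  Vsat Sigma (nseq n 0, nseq n.+1 0) ->
  ~ inV Sigma (Mgamma W_xxyy) ->
  Vsat Sigma (nseq n 0 ++ nseq n 1, wpow (nseq n 0 ++ nseq n 1) n).
Proof.
move=> V_aperiodic V_Mg M [HM M_Sigma].
have aperiodic (x : M) : mpow x n = mpow x n.+1.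
  by have := V_aperiodic M (conj HM M_Sigma) (fun=> x); rewrite /= !ev_nseq.
have [i Sigma_i [g g_sep]] : exists2 i, Sigma i & exists g : nat -> Mxy, ev g i.1 <> ev g i.2.
  apply: NNPP => no_sep; apply: V_Mg; split.
    exact: is_monoid_image xy_to_Mg_mul xy_to_Mg_one Mg_to_xyK Mxy_monoid.
  move=> i Sigma_i; apply: (sat_image xy_to_Mg_mul xy_to_Mg_one Mg_to_xyK) => g.
  by apply: NNPP => g_sep; apply: no_sep; exists i => //; exists g.
exact: (sat_xnyn_of_separating HM aperiodic (M_Sigma i Sigma_i) g_sep).
Qed.
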